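(* Under the standing assumptions below, suppose $3\sigma>2L$, $0<\gamma<\frac{3\sigma-2L}{L^2}$, and that the sequence $\{(y^t,z^t,x^t)\}$ generated by the PR splitting iteration has a cluster point $(y^*,z^*,x^* )$. Suppose also that $\mathcal{P}_\gamma$ is a KL function. Then the whole sequence $\{(y^t,z^t,x^t)\}$ is convergent.
   Context: Standing assumptions: $f:\mathbb{R}^n\to\mathbb{R}$ is differentiable and strongly convex with modulus at least $\sigma>0$ (i.e. $f-\frac{\sigma}{2}\|\cdot\|^2$ is convex), and $\nabla f$ is Lipschitz continuous with modulus at most $L>0$. The function $g:\mathbb{R}^n\to(-\infty,\infty]$ is proper and lower semicontinuous, and for the $\gamma>0$ used, $\operatorname{Argmin}_u\{\gamma g(u)+\frac12\|u-w\|^2\}$ is nonempty for every $w\in\mathbb{R}^n$. PR splitting iteration: given $x^0$ and $\gamma>0$, for $t=0,1,2,\dots$: $y^{t+1}=\operatorname{argmin}_y\{f(y)+\frac{1}{2\gamma}\|y-x^t\|^2\}$; $z^{t+1}\in\operatorname{Argmin}_z\{g(z)+\frac{1}{2\gamma}\|2y^{t+1}-x^t-z\|^2\}$; $x^{t+1}=x^t+2(z^{t+1}-y^{t+1})$. Merit function: $\mathcal{P}_\gamma(y,z,x):=f(y)+g(z)-\frac{3}{2\gamma}\|y-z\|^2+\frac{1}{\gamma}\langle x-y,z-y\rangle$. KL function: a proper lower semicontinuous $h$ is a KL function if it has the Kurdyka–Łojasiewicz property at every point $\bar w$ of $\operatorname{dom}\partial h$, i.e. there exist $\eta\in(0,\infty]$,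 a neighborhood $U$ of $\bar w$ and a continuous concave $\varphi:[0,\eta)\to[0,\infty)$ with $\varphi(0)=0$, $\varphi$ continuously differentiable on $(0,\eta)$ with $\varphi'>0$, such that $\varphi'(h(w)-h(\bar w))\operatorname{dist}(0,\partial h(w))\ge1$ for all $w\in U$ with $h(\bar w)<h(w)<h(\bar w)+\eta$ ($\partial$ the limiting subdifferential). *)

From Stdlib Require Import Reals.
From Stdlib Require Vectors.Fin.
Open Scope R_scope.

Definition vec (n : nat) : Type := Fin.t n -> R.

Fixpoint fsum (n : nat) : (Fin.t n -> R) -> R :=
  match n return (Fin.t n -> R) -> R with
  | O => fun _ => 0
  | S m => fun v => v Fin.F1 + fsum m (fun i => v (Fin.FS i))
  end.

Definition vdot {n} (u v : vec n) : R := fsum n (fun i => u i * v i).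
Definition vadd {n} (u v : vec n) : vec n := fun i => u i + v i.
Definition vsub {n} (u v : vec n) : vec n := fun i => u i - v i.
Definition vscal {n} (a : R) (u : vec n) : vec n := fun i => a * u i.
Definition vnorm {n} (u : vec n) : R := sqrt (vdot u u).

Definition enorm {E} (ip : E -> E -> R) (u : E) : R := sqrt (ip u u).

Definition ecv {E} (ip : E -> E -> R) (sub : E -> E -> E) (s : nat -> E) (l : E) : Prop :=
  Un_cv (fun k => enorm ip (sub (s k) l)) 0.

Definition ecluster {E} (ip : E -> E -> R) (sub : E -> E -> E) (s : nat -> E) (l : E) : Prop :=
  forall eps, eps > 0 -> forall N : nat, exists k : nat, (N <= k)%nat /\ enorm ip (sub (s k) l) < eps.

(* extended-real valued functions: None stands for +infinity *)
Definition eproper {E} (h : E -> option R) : Prop := exists w r, h w = Some r.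

(* lower semicontinuity: all sublevel sets {h <= alpha} are closed *)
Definition elsc {E} (ip : E -> E -> R) (sub : E -> E -> E) (h : E -> option R) : Prop :=
  forall (alpha : R) (s : nat -> E) (l : E),
    (forall k, exists r, h (s k) = Some r /\ r <= alpha) ->
    ecv ip sub s l ->
    exists r, h l = Some r /\ r <= alpha.

Definition frechet_subgrad {E} (ip : E -> E -> R) (sub : E -> E -> E)
    (h : E -> option R) (w v : E) : Prop :=
  exists hw, h w = Some hw /\
  forall eps, eps > 0 -> exists delta, delta > 0 /\
    forall u, enorm ip (sub u w) < delta ->
      match h u with
      | None => True
      | Some hu => hu >= hw + ip v (sub u w) - eps * enorm ip (sub u w)
      end.

Definition limiting_subgrad {E} (ip : E -> E -> R) (sub : E -> E -> E)
    (h : E -> option R) (w v : E) : Prop :=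
  exists hw, h w = Some hw /\
  exists (wk vk : nat -> E) (hk : nat -> R),
    (forall k, h (wk k) = Some (hk k) /\ frechet_subgrad ip sub h (wk k) (vk k)) /\
    ecv ip sub wk w /\ Un_cv hk hw /\ ecv ip sub vk v.

(* eta in (0, +infinity]: None stands for +infinity *)
Definition lt_eta (s : R) (eta : option R) : Prop :=
  match eta with None => True | Some e => s < e end.

(* KL property at wb (wb in dom \partial h);  the inequality
   phi'(h w - h wb) * dist(0, \partial h w) >= 1 is written out as
   "for every v in \partial h w, phi'(h w - h wb) * ||v|| >= 1"
   (dist = infimum of ||v||, +infinity on the empty set). *)
Definition KL_at {E} (ip : E -> E -> R) (sub : E -> E -> E)
    (h : E -> option R) (wb : E) : Prop :=
  exists hb, h wb = Some hb /\
  exists (eta : option R) (delta : R) (phi dphi : R -> R),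
    lt_eta 0 eta /\ delta > 0 /\
    phi 0 = 0 /\
    (forall s, 0 <= s -> lt_eta s eta -> 0 <= phi s) /\
    (forall s, 0 <= s -> lt_eta s eta ->
       forall eps, eps > 0 -> exists d, d > 0 /\
         forall t, 0 <= t -> lt_eta t eta -> Rabs (t - s) < d -> Rabs (phi t - phi s) < eps) /\
    (forall a b t, 0 <= a -> lt_eta a eta -> 0 <= b -> lt_eta b eta -> 0 <= t <= 1 ->
       t * phi a + (1 - t) * phi b <= phi (t * a + (1 - t) * b)) /\
    (forall s, 0 < s -> lt_eta s eta ->
       derivable_pt_lim phi s (dphi s) /\ continuity_pt dphi s /\ 0 < dphi s) /\
    (forall w hw, enorm ip (sub w wb) < delta -> h w = Some hw ->
       hb < hw -> lt_eta (hw - hb) eta ->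
       forall v, limiting_subgrad ip sub h w v -> dphi (hw - hb) * enorm ip v >= 1).

Definition KL_function {E} (ip : E -> E -> R) (sub : E -> E -> E) (h : E -> option R) : Prop :=
  eproper h /\ elsc ip sub h /\
  forall wb, (exists v, limiting_subgrad ip sub h wb v) -> KL_at ip sub h wb.

Definition vcv {n} (s : nat -> vec n) (l : vec n) : Prop := ecv (@vdot n) (@vsub n) s l.

Definition triple (n : nat) : Type := (vec n * vec n * vec n)%type.
Definition tdot {n} (a b : triple n) : R :=
  let '(a1, a2, a3) := a in let '(b1, b2, b3) := b in vdot a1 b1 + vdot a2 b2 + vdot a3 b3.
Definition tsub {n} (a b : triple n) : triple n :=
  let '(a1, a2, a3) := a in let '(b1, b2, b3) := b in (vsub a1 b1, vsub a2 b2, vsub a3 b3).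

Definition is_gradient {n} (f : vec n -> R) (df : vec n -> vec n) : Prop :=
  forall x eps, eps > 0 -> exists delta, delta > 0 /\
    forall y, vnorm (vsub y x) < delta ->
      Rabs (f y - f x - vdot (df x) (vsub y x)) <= eps * vnorm (vsub y x).

Definition convex_fun {n} (h : vec n -> R) : Prop :=
  forall x y t, 0 <= t <= 1 ->
    h (vadd (vscal t x) (vscal (1 - t) y)) <= t * h x + (1 - t) * h y.

Definition strongly_convex {n} (f : vec n -> R) (sigma : R) : Prop :=
  convex_fun (fun x => f x - sigma / 2 * (vnorm x) ^ 2).

Definition lipschitz {n} (F : vec n -> vec n) (L : R) : Prop :=
  forall x y, vnorm (vsub (F x) (F y)) <= L * vnorm (vsub x y).

Definition argmin_g {n} (g : vec n -> option R) (c k : R) (w u : vec n) : Prop :=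
  exists gu, g u = Some gu /\
  forall v gv, g v = Some gv ->
    c * gu + k * (vnorm (vsub u w)) ^ 2 <= c * gv + k * (vnorm (vsub v w)) ^ 2.

Definition PR_iteration {n} (f : vec n -> R) (g : vec n -> option R) (gamma : R)
    (y z x : nat -> vec n) : Prop :=
  forall t : nat,
    (forall v, f (y (S t)) + / (2 * gamma) * (vnorm (vsub (y (S t)) (x t))) ^ 2
               <= f v + / (2 * gamma) * (vnorm (vsub v (x t))) ^ 2) /\
    argmin_g g 1 (/ (2 * gamma)) (vsub (vscal 2 (y (S t))) (x t)) (z (S t)) /\
    x (S t) = vadd (x t) (vscal 2 (vsub (z (S t)) (y (S t)))).

Definition Pgamma {n} (f : vec n -> R) (g : vec n -> option R) (gamma : R)
    (w : triple n) : option R :=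
  let '(y, z, x) := w in
  match g z with
  | None => None
  | Some gz => Some (f y + gz - 3 / (2 * gamma) * (vnorm (vsub y z)) ^ 2
                     + / gamma * vdot (vsub x y) (vsub z y))
  end.

(* Let d_t = |y^(t+1) - y^t|.  Optimality of the y-step gives x^t = y^(t+1) + gamma grad f (y^(t+1))
   and the x-update gives z^(t+1) = y^(t+1) + (x^(t+1) - x^t)/2, so all increments of the iterates
   are O(d_t + d_(t+1)).  Strong convexity and the Lipschitz gradient make the merit function drop
   by (sigma - gamma L^2)/2 d_(t+1)^2 per step (the step-size condition gives gamma L^2 < sigma
   because sigma <= L), and (0, (x^t - x^(t+1))/gamma, (x^(t+1) - x^t)/(2 gamma)) is a Frechet
   subgradient of P_gamma at the (t+1)-st iterate, of norm O(d_(t+1)).  Lower semicontinuity and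
   the minimality of the z-step against z* make the merit values decrease to the value P_lim of
   P_gamma at the cluster point, where 0 is then a limiting subgradient.  Near the cluster point
   the KL inequality and the concavity of phi give d_t <= C (phi (P_t - P_lim) - phi (P_(t+1) - P_lim)),
   so by induction the iterates stay in the KL neighbourhood and the path has finite length;
   a sequence of finite length converges to its cluster point. *)

From Stdlib Require Import Reals Lra Psatz FunctionalExtensionality IndefiniteDescription.
Open Scope R_scope.

Lemma Rabs_le_inv x a : Rabs x <= a -> - a <= x <= a.
Proof. pose proof (Rle_abs x). pose proof (Rle_abs (- x)). rewrite Rabs_Ropp in *. lra. Qed.

Ltac vext := apply functional_extensionality; intro; unfold vadd, vsub, vscal; field.

Lemma fsum_ext n (F G : Fin.t n -> R) : (forall i, F i = G i) -> fsum n F = fsum n G.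
Proof.
  induction n; simpl; intros H; [reflexivity|].
  rewrite H, (IHn _ (fun i => G (Fin.FS i))); auto.
Qed.

Lemma fsum_add n (F G : Fin.t n -> R) : fsum n (fun i => F i + G i) = fsum n F + fsum n G.
Proof. induction n; simpl; [lra|]. rewrite (IHn (fun i => F (Fin.FS i))). lra. Qed.

Lemma fsum_sub n (F G : Fin.t n -> R) : fsum n (fun i => F i - G i) = fsum n F - fsum n G.
Proof. induction n; simpl; [lra|]. rewrite (IHn (fun i => F (Fin.FS i))). lra. Qed.

Lemma fsum_scal n c (F : Fin.t n -> R) : fsum n (fun i => c * F i) = c * fsum n F.
Proof. induction n; simpl; [lra|]. rewrite (IHn (fun i => F (Fin.FS i))). lra. Qed.

Lemma fsum_nonneg n (F : Fin.t n -> R) : (forall i, 0 <= F i) -> 0 <= fsum n F.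
Proof.
  induction n; simpl; intros H; [lra|].
  pose proof (H Fin.F1). pose proof (IHn (fun i => F (Fin.FS i)) (fun i => H _)). lra.
Qed.

Lemma fsum_nonneg_eq0 n (F : Fin.t n -> R) :
  (forall i, 0 <= F i) -> fsum n F = 0 -> forall i, F i = 0.
Proof.
  induction n; simpl; intros H H0 i; [inversion i|].
  pose proof (H Fin.F1). pose proof (fsum_nonneg n (fun i => F (Fin.FS i)) (fun i => H _)).
  pattern i; apply Fin.caseS'; [lra|].
  intro p. apply (IHn (fun i => F (Fin.FS i))); auto. lra.
Qed.

Lemma vdot_comm n (a b : vec n) : vdot a b = vdot b a.
Proof. apply fsum_ext. intros; ring. Qed.

Lemma vdot_addl n (a b c : vec n) : vdot (vadd a b) c = vdot a c + vdot b c.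
Proof. unfold vdot, vadd. rewrite <- fsum_add. apply fsum_ext; intros; ring. Qed.

Lemma vdot_subl n (a b c : vec n) : vdot (vsub a b) c = vdot a c - vdot b c.
Proof. unfold vdot, vsub. rewrite <- fsum_sub. apply fsum_ext; intros; ring. Qed.

Lemma vdot_scall n k (a c : vec n) : vdot (vscal k a) c = k * vdot a c.
Proof. unfold vdot, vscal. rewrite <- fsum_scal. apply fsum_ext; intros; ring. Qed.

Lemma vdot_addr n (a b c : vec n) : vdot c (vadd a b) = vdot c a + vdot c b.
Proof. rewrite !(vdot_comm n c). apply vdot_addl. Qed.

Lemma vdot_subr n (a b c : vec n) : vdot c (vsub a b) = vdot c a - vdot c b.
Proof. rewrite !(vdot_comm n c). apply vdot_subl. Qed.

Lemma vdot_scalr n k (a c : vec n) : vdot c (vscal k a) = k * vdot c a.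
Proof. rewrite !(vdot_comm n c). apply vdot_scall. Qed.

Lemma vdot0l n (a : vec n) : vdot (fun _ => 0) a = 0.
Proof.
  unfold vdot. rewrite (fsum_ext n _ (fun _ => 0 * 0)) by (intros; ring).
  rewrite (fsum_scal n 0 (fun _ => 0)). ring.
Qed.

Lemma vdot_ge0 n (a : vec n) : 0 <= vdot a a.
Proof. apply fsum_nonneg. intros; nra. Qed.

(* Leaves [vdot a b] and [vdot b a] as distinct atoms: normalize with [vdot_comm] afterwards. *)
Ltac vexp := repeat rewrite ?vdot_addl, ?vdot_addr, ?vdot_subl, ?vdot_subr, ?vdot_scall, ?vdot_scalr.

Ltac vexp_in H :=
  repeat rewrite ?vdot_addl, ?vdot_addr, ?vdot_subl, ?vdot_subr, ?vdot_scall, ?vdot_scalr in H.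

Lemma vdot_sub_self_eq0 n (a b : vec n) : vdot (vsub a b) (vsub a b) = 0 -> a = b.
Proof.
  intros H. apply functional_extensionality. intro i.
  assert (Hsq : forall j, 0 <= vsub a b j * vsub a b j) by (intro j; nra).
  assert (Hi := fsum_nonneg_eq0 n _ Hsq H i).
  unfold vsub in Hi. nra.
Qed.

Lemma vnorm_sq n (a : vec n) : vnorm a ^ 2 = vdot a a.
Proof. unfold vnorm. rewrite pow2_sqrt; auto using vdot_ge0. Qed.

Lemma vnorm_ge0 n (a : vec n) : 0 <= vnorm a.
Proof. apply sqrt_pos. Qed.

Lemma sqrt_le_of_sq a r : 0 <= r -> a <= r ^ 2 -> sqrt a <= r.
Proof. intros. rewrite <- (sqrt_pow2 r) by auto. apply sqrt_le_1_alt; auto. Qed.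

Lemma vnorm_le n (a : vec n) r : 0 <= r -> vdot a a <= r ^ 2 -> vnorm a <= r.
Proof. apply sqrt_le_of_sq. Qed.

Lemma Cauchy_Schwarz_sq n (a b : vec n) : vdot a b ^ 2 <= vdot a a * vdot b b.
Proof.
  (* the quadratic t |-> ||a - t b||^2 is nonnegative *)
  assert (H : forall t, 0 <= vdot a a - 2 * t * vdot a b + t ^ 2 * vdot b b).
  { intro t. pose proof (vdot_ge0 n (vsub a (vscal t b))) as H. vexp_in H.
    rewrite (vdot_comm n b a) in H. nra. }
  pose proof (vdot_ge0 n a). pose proof (vdot_ge0 n b).
  destruct (Req_dec (vdot b b) 0) as [E|E].
  - rewrite E. destruct (Req_dec (vdot a b) 0) as [E2|E2]; [rewrite E2; nra|].
    specialize (H ((vdot a a + 1) / (2 * vdot a b))). rewrite E in H.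
    replace (vdot a a - 2 * ((vdot a a + 1) / (2 * vdot a b)) * vdot a b
             + ((vdot a a + 1) / (2 * vdot a b)) ^ 2 * 0) with (-1) in H by (field; auto).
    lra.
  - specialize (H (vdot a b / vdot b b)).
    replace (vdot a a - 2 * (vdot a b / vdot b b) * vdot a b + (vdot a b / vdot b b) ^ 2 * vdot b b)
      with ((vdot a a * vdot b b - vdot a b ^ 2) / vdot b b) in H by (field; lra).
    apply Rmult_le_compat_r with (r := vdot b b) in H; [|lra].
    unfold Rdiv in H. rewrite Rmult_0_l, Rmult_assoc, Rinv_l, Rmult_1_r in H by lra. lra.
Qed.

Lemma Cauchy_Schwarz n (a b : vec n) : Rabs (vdot a b) <= vnorm a * vnorm b.
Proof.
  unfold vnorm. rewrite <- sqrt_mult by apply vdot_ge0.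
  rewrite <- sqrt_Rsqr_abs. apply sqrt_le_1_alt. unfold Rsqr.
  pose proof (Cauchy_Schwarz_sq n a b). nra.
Qed.

Lemma vnorm_add n (a b : vec n) : vnorm (vadd a b) <= vnorm a + vnorm b.
Proof.
  pose proof (vnorm_ge0 n a); pose proof (vnorm_ge0 n b).
  apply vnorm_le; [lra|]. vexp.
  pose proof (Cauchy_Schwarz n a b). pose proof (Rle_abs (vdot a b)).
  rewrite (vdot_comm n b a), <- (vnorm_sq n a), <- (vnorm_sq n b). nra.
Qed.

Lemma vnorm_triangle n (a b c : vec n) : vnorm (vsub a c) <= vnorm (vsub a b) + vnorm (vsub b c).
Proof. replace (vsub a c) with (vadd (vsub a b) (vsub b c)) by vext. apply vnorm_add. Qed.

Lemma vnorm_scal n k (a : vec n) : vnorm (vscal k a) = Rabs k * vnorm a.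
Proof.
  unfold vnorm. rewrite vdot_scall, vdot_scalr, <- Rmult_assoc, sqrt_mult_alt by nra.
  rewrite <- sqrt_Rsqr_abs. reflexivity.
Qed.

Lemma vnorm_subC n (a b : vec n) : vnorm (vsub a b) = vnorm (vsub b a).
Proof. unfold vnorm. f_equal. vexp. rewrite (vdot_comm n a b). ring. Qed.

Lemma vnorm_sub_self n (a : vec n) : vnorm (vsub a a) = 0.
Proof. replace (vsub a a) with (vscal 0 a) by vext. rewrite vnorm_scal, Rabs_R0. ring. Qed.

Lemma quadratic_form_lower_bound n (a b c : vec n) :
  -3/2 * vdot (vsub a b) (vsub a b) + vdot (vsub c a) (vsub b a) - /2 * vdot b b
  >= - 6 * (vdot a a + vdot b b + vdot c c).
Proof.
  pose proof (vdot_ge0 n (vadd a b)). pose proof (vdot_ge0 n (vadd (vsub c a) (vsub b a))).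
  pose proof (vdot_ge0 n (vadd c a)). pose proof (vdot_ge0 n a).
  pose proof (vdot_ge0 n b). pose proof (vdot_ge0 n c).
  vexp_in H. vexp_in H0. vexp_in H1. vexp.
  rewrite ?(vdot_comm n b a), ?(vdot_comm n c a), ?(vdot_comm n c b) in *. lra.
Qed.

Lemma gradient_directional n (f : vec n -> R) df : is_gradient f df ->
  forall y d eps, eps > 0 -> exists t0, t0 > 0 /\ forall t, 0 < t <= t0 ->
    Rabs (f (vadd y (vscal t d)) - f y - t * vdot (df y) d) <= eps * t.
Proof.
  intros Hg y d eps Heps. pose proof (vnorm_ge0 n d) as Hd.
  destruct (Hg y (eps / (vnorm d + 1))) as [delta [Hdel H]].
  { apply Rdiv_lt_0_compat; lra. }
  exists (delta / (vnorm d + 1) / 2). split.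
  { apply Rdiv_lt_0_compat; [apply Rdiv_lt_0_compat|]; lra. }
  intros t [Ht0 Ht].
  specialize (H (vadd y (vscal t d))).
  replace (vsub (vadd y (vscal t d)) y) with (vscal t d) in H by vext.
  rewrite vnorm_scal, vdot_scalr, Rabs_right in H by lra.
  assert (Htd : t * (vnorm d + 1) <= delta / 2).
  { apply Rmult_le_compat_r with (r := vnorm d + 1) in Ht; [|lra].
    replace (delta / (vnorm d + 1) / 2 * (vnorm d + 1)) with (delta / 2) in Ht by (field; lra).
    lra. }
  assert (Hk : eps / (vnorm d + 1) * vnorm d <= eps).
  { apply Rmult_le_reg_r with (vnorm d + 1); [lra|].
    replace (eps / (vnorm d + 1) * vnorm d * (vnorm d + 1)) with (eps * vnorm d) by (field; lra).
    nra. }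
  eapply Rle_trans; [apply H; nra|]. nra.
Qed.

Lemma strongly_convex_gradient_ineq n (f : vec n -> R) df sigma :
  is_gradient f df -> strongly_convex f sigma -> 0 < sigma ->
  forall y u, f u >= f y + vdot (df y) (vsub u y) + sigma / 2 * vdot (vsub u y) (vsub u y).
Proof.
  intros Hg Hc Hs y u. set (d := vsub u y). apply Rle_ge.
  apply Rle_plus_epsilon. intros e He.
  destruct (gradient_directional n f df Hg y d (e / 2) ltac:(lra)) as [t0 [Ht0 Hdir]].
  pose proof (vdot_ge0 n d) as Hdd.
  set (t := Rmin t0 (Rmin 1 (e / (sigma * vdot d d + 1)))).
  assert (Htp : 0 < t).
  { apply Rmin_pos; auto. apply Rmin_pos; [lra|]. apply Rdiv_lt_0_compat; nra. }
  assert (Ht1 : t <= 1) by (unfold t; eapply Rle_trans; [apply Rmin_r|apply Rmin_l]).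
  assert (Hte : t * (sigma * vdot d d) <= e).
  { assert (t <= e / (sigma * vdot d d + 1))
      by (unfold t; eapply Rle_trans; [apply Rmin_r | apply Rmin_r]).
    apply Rmult_le_compat_r with (r := sigma * vdot d d + 1) in H; [|nra].
    replace (e / (sigma * vdot d d + 1) * (sigma * vdot d d + 1)) with e in H by (field; nra).
    nra. }
  specialize (Hdir t (conj Htp (Rmin_l _ _))). apply Rabs_le_inv in Hdir.
  specialize (Hc u y t (conj (Rlt_le _ _ Htp) Ht1)). cbv beta in Hc.
  replace (vadd (vscal t u) (vscal (1 - t) y)) with (vadd y (vscal t d)) in Hc
    by (unfold d; vext).
  replace u with (vadd y d) in Hc at 2 by (unfold d; vext).
  rewrite !vnorm_sq in Hc. vexp_in Hc. rewrite (vdot_comm n d y) in Hc.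
  assert (t * (f y + vdot (df y) d + sigma / 2 * vdot d d - f u) <= t * e) by nra.
  apply Rmult_le_reg_l in H; lra.
Qed.

Lemma strongly_convex_gradient_monotone n (f : vec n -> R) df sigma :
  is_gradient f df -> strongly_convex f sigma -> 0 < sigma ->
  forall a b, vdot (vsub (df a) (df b)) (vsub a b) >= sigma * vdot (vsub a b) (vsub a b).
Proof.
  intros Hg Hc Hs a b.
  pose proof (strongly_convex_gradient_ineq n f df sigma Hg Hc Hs a b) as H1.
  pose proof (strongly_convex_gradient_ineq n f df sigma Hg Hc Hs b a) as H2.
  vexp_in H1. vexp_in H2. vexp. rewrite (vdot_comm n b a) in *. lra.
Qed.

Lemma strong_convexity_le_lipschitz n (f : vec n -> R) df sigma L :
  is_gradient f df -> strongly_convex f sigma -> 0 < sigma -> lipschitz df L -> (0 < n)%nat ->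
  sigma <= L.
Proof.
  intros Hg Hc Hs HL Hn.
  set (a := fun _ : Fin.t n => 1). set (b := fun _ : Fin.t n => 0).
  assert (Hab : 0 < vdot (vsub a b) (vsub a b)).
  { destruct n as [|m]; [lia|]. unfold vdot; cbn [fsum].
    assert (0 <= fsum m (fun i => vsub a b (Fin.FS i) * vsub a b (Fin.FS i)))
      by (apply fsum_nonneg; intros; nra).
    unfold vsub, a, b in *. lra. }
  pose proof (strongly_convex_gradient_monotone n f df sigma Hg Hc Hs a b) as H1.
  pose proof (Cauchy_Schwarz n (vsub (df a) (df b)) (vsub a b)) as H2.
  pose proof (HL a b) as H3. pose proof (Rle_abs (vdot (vsub (df a) (df b)) (vsub a b))).
  pose proof (vnorm_ge0 n (vsub (df a) (df b))). pose proof (vnorm_ge0 n (vsub a b)).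
  rewrite <- vnorm_sq in H1, Hab.
  assert (sigma * vnorm (vsub a b) ^ 2 <= L * vnorm (vsub a b) ^ 2) by nra.
  nra.
Qed.

Lemma prox_gradient_eq n (f : vec n -> R) df gamma (y1 x0 : vec n) :
  is_gradient f df -> 0 < gamma ->
  (forall v, f y1 + / (2 * gamma) * vnorm (vsub y1 x0) ^ 2
             <= f v + / (2 * gamma) * vnorm (vsub v x0) ^ 2) ->
  df y1 = vscal (/ gamma) (vsub x0 y1).
Proof.
  intros Hg Hgam Hmin.
  set (G := vadd (df y1) (vscal (/ gamma) (vsub y1 x0))).
  assert (Hk : 0 < / (2 * gamma)) by (apply Rinv_0_lt_compat; lra).
  assert (HGG : vdot G G <= 0).
  { apply Rle_plus_epsilon. intros e He. set (d := vscal (-1) G).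
    destruct (gradient_directional n f df Hg y1 d (e / 2) ltac:(lra)) as [t0 [Ht0 Hdir]].
    pose proof (vdot_ge0 n d) as Hdd.
    set (t := Rmin t0 (e / 2 / (/ (2 * gamma) * vdot d d + 1))).
    assert (Htp : 0 < t).
    { apply Rmin_pos; auto. apply Rdiv_lt_0_compat; nra. }
    assert (Hte : t * (/ (2 * gamma) * vdot d d) <= e / 2).
    { assert (t <= e / 2 / (/ (2 * gamma) * vdot d d + 1)) by apply Rmin_r.
      apply Rmult_le_compat_r with (r := / (2 * gamma) * vdot d d + 1) in H; [|nra].
      replace (e / 2 / (/ (2 * gamma) * vdot d d + 1) * (/ (2 * gamma) * vdot d d + 1))
        with (e / 2) in H by (field; nra).
      nra. }
    specialize (Hdir t (conj Htp (Rmin_l _ _))). apply Rabs_le_inv in Hdir.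
    specialize (Hmin (vadd y1 (vscal t d))).
    replace (vsub (vadd y1 (vscal t d)) x0) with (vadd (vsub y1 x0) (vscal t d)) in Hmin by vext.
    assert (Hid : vdot (df y1) d + 2 * / (2 * gamma) * vdot (vsub y1 x0) d = - vdot G G).
    { unfold d, G. vexp. field. lra. }
    set (X := vsub y1 x0) in Hmin, Hid.
    rewrite !vnorm_sq in Hmin. vexp_in Hmin. rewrite (vdot_comm n d X) in Hmin.
    assert (t * vdot G G <= t * e) by nra.
    apply Rmult_le_reg_l in H; lra. }
  apply vdot_sub_self_eq0. pose proof (vdot_ge0 n G).
  replace (vsub (df y1) (vscal (/ gamma) (vsub x0 y1))) with G; [lra | unfold G; vext; lra].
Qed.

Lemma Un_cv_const c : Un_cv (fun _ => c) c.
Proof. intros eps He. exists 0%nat. intros. unfold Rdist. rewrite Rminus_diag, Rabs_R0. lra. Qed.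

Lemma Un_cv_dominated (u e : nat -> R) l :
  (exists N, forall j, (j >= N)%nat -> Rabs (u j - l) <= e j) -> Un_cv e 0 -> Un_cv u l.
Proof.
  intros [N0 HN] He eps Heps. destruct (He eps Heps) as [N1 H1]. exists (max N0 N1).
  intros j Hj. unfold Rdist in *. specialize (H1 j ltac:(lia)). specialize (HN j ltac:(lia)).
  rewrite Rminus_0_r in H1. pose proof (Rle_abs (e j)). lra.
Qed.

Lemma Un_cv_squeeze0 (u e : nat -> R) : (forall j, 0 <= u j <= e j) -> Un_cv e 0 -> Un_cv u 0.
Proof.
  intros H. apply Un_cv_dominated. exists 0%nat; intros j _.
  rewrite Rminus_0_r, Rabs_right; apply H || apply Rle_ge, H.
Qed.

Lemma Un_cv_subseq (u : nat -> R) (s : nat -> nat) l :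
  Un_cv u l -> (forall j, (j <= s j)%nat) -> Un_cv (fun j => u (s j)) l.
Proof.
  intros H Hs eps He. destruct (H eps He) as [N HN]. exists N. intros j Hj. apply HN.
  specialize (Hs j). lia.
Qed.

Lemma vcv_vnorm n (a : nat -> vec n) l : vcv a l <-> Un_cv (fun k => vnorm (vsub (a k) l)) 0.
Proof. reflexivity. Qed.

Lemma vcv_const n (c : vec n) : vcv (fun _ => c) c.
Proof. apply vcv_vnorm. rewrite vnorm_sub_self. apply Un_cv_const. Qed.

Lemma vcv_sub n (a b : nat -> vec n) la lb :
  vcv a la -> vcv b lb -> vcv (fun j => vsub (a j) (b j)) (vsub la lb).
Proof.
  rewrite !vcv_vnorm. intros Ha Hb.
  apply Un_cv_dominated with (e := fun j => vnorm (vsub (a j) la) + vnorm (vsub (b j) lb)).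
  - exists 0%nat. intros j _. rewrite Rminus_0_r, Rabs_right by apply Rle_ge, vnorm_ge0.
    replace (vsub (vsub (a j) (b j)) (vsub la lb))
      with (vadd (vsub (a j) la) (vscal (-1) (vsub (b j) lb))) by vext.
    eapply Rle_trans; [apply vnorm_add|]. rewrite vnorm_scal, Rabs_left by lra. lra.
  - rewrite <- (Rplus_0_r 0). apply CV_plus; auto.
Qed.

Lemma vcv_scal n (a : nat -> vec n) la k : vcv a la -> vcv (fun j => vscal k (a j)) (vscal k la).
Proof.
  rewrite !vcv_vnorm. intros Ha.
  apply Un_cv_dominated with (e := fun j => Rabs k * vnorm (vsub (a j) la)).
  - exists 0%nat. intros j _. rewrite Rminus_0_r, Rabs_right by apply Rle_ge, vnorm_ge0.
    replace (vsub (vscal k (a j)) (vscal k la)) with (vscal k (vsub (a j) la)) by vext.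
    rewrite vnorm_scal. lra.
  - rewrite <- (Rmult_0_r (Rabs k)). apply CV_mult; auto using Un_cv_const.
Qed.

Lemma vdot_cv n (a b : nat -> vec n) la lb :
  vcv a la -> vcv b lb -> Un_cv (fun j => vdot (a j) (b j)) (vdot la lb).
Proof.
  rewrite !vcv_vnorm. intros Ha Hb.
  apply Un_cv_dominated with (e := fun j => vnorm (vsub (a j) la) * (vnorm lb + vnorm (vsub (b j) lb))
                                          + vnorm la * vnorm (vsub (b j) lb)).
  - exists 0%nat. intros j _.
    replace (vdot (a j) (b j) - vdot la lb)
      with (vdot (vsub (a j) la) (b j) + vdot la (vsub (b j) lb)) by (vexp; ring).
    eapply Rle_trans; [apply Rabs_triang|].
    pose proof (Cauchy_Schwarz n (vsub (a j) la) (b j)).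
    pose proof (Cauchy_Schwarz n la (vsub (b j) lb)).
    assert (vnorm (b j) <= vnorm lb + vnorm (vsub (b j) lb)).
    { replace (b j) with (vadd lb (vsub (b j) lb)) at 1 by vext. apply vnorm_add. }
    pose proof (vnorm_ge0 n (vsub (a j) la)). nra.
  - replace 0 with (0 * (vnorm lb + 0) + vnorm la * 0) by ring.
    repeat first [assumption | apply CV_plus | apply CV_mult | apply Un_cv_const].
Qed.

Lemma gradient_cv n (f : vec n -> R) df (a : nat -> vec n) la :
  is_gradient f df -> vcv a la -> Un_cv (fun j => f (a j)) (f la).
Proof.
  rewrite vcv_vnorm. intros Hg Ha. destruct (Hg la 1 ltac:(lra)) as [dl [Hdl H]].
  apply Un_cv_dominated with (e := fun j => (vnorm (df la) + 1) * vnorm (vsub (a j) la)).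
  - destruct (Ha dl Hdl) as [N HN]. exists N. intros j Hj. specialize (HN j Hj).
    unfold Rdist in HN. rewrite Rminus_0_r, Rabs_right in HN by apply Rle_ge, vnorm_ge0.
    specialize (H (a j) HN). pose proof (Cauchy_Schwarz n (df la) (vsub (a j) la)).
    pose proof (Rabs_triang (f (a j) - f la - vdot (df la) (vsub (a j) la))
                            (vdot (df la) (vsub (a j) la))).
    replace (f (a j) - f la - vdot (df la) (vsub (a j) la) + vdot (df la) (vsub (a j) la))
      with (f (a j) - f la) in H1 by ring.
    lra.
  - rewrite <- (Rmult_0_r (vnorm (df la) + 1)). apply CV_mult; auto using Un_cv_const.
Qed.

Lemma vcv_shift n (a : nat -> vec n) l N : vcv (fun j => a (j + N)%nat) l -> vcv a l.
Proof. rewrite !vcv_vnorm. apply (CV_shift (fun j => vnorm (vsub (a j) l))). Qed.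

Lemma ecluster_subseq {E} (ip : E -> E -> R) sub (s : nat -> E) l :
  ecluster ip sub s l ->
  exists phi : nat -> nat, (forall j, (j < phi j)%nat) /\ ecv ip sub (fun j => s (phi j)) l.
Proof.
  intros Hcl.
  assert (H : forall j, exists k, (S j <= k)%nat /\ enorm ip (sub (s k) l) < RinvN j).
  { intro j. apply Hcl. apply cond_pos. }
  exists (fun j => proj1_sig (constructive_indefinite_description _ (H j))). split.
  - intro j. exact (proj1 (proj2_sig (constructive_indefinite_description _ (H j)))).
  - apply Un_cv_squeeze0 with (e := fun j => pos (RinvN j)); [|exact RinvN_cv].
    intro j. split; [apply sqrt_pos|].
    apply Rlt_le, (proj2 (proj2_sig (constructive_indefinite_description _ (H j)))).
Qed.

Lemma ecluster_shift {E} (ip : E -> E -> R) sub (s : nat -> E) l N :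
  ecluster ip sub s l -> ecluster ip sub (fun j => s (j + N)%nat) l.
Proof.
  intros H eps He M. destruct (H eps He (M + N)%nat) as [k [Hk Hd]].
  exists (k - N)%nat. split; [lia|]. replace (k - N + N)%nat with k by lia. exact Hd.
Qed.

Lemma tnorm_ge_components n (a b c la lb lc : vec n) :
  vnorm (vsub a la) <= enorm (@tdot n) (tsub (a, b, c) (la, lb, lc)) /\
  vnorm (vsub b lb) <= enorm (@tdot n) (tsub (a, b, c) (la, lb, lc)) /\
  vnorm (vsub c lc) <= enorm (@tdot n) (tsub (a, b, c) (la, lb, lc)).
Proof.
  unfold enorm, tdot, tsub, vnorm. cbv beta iota.
  pose proof (vdot_ge0 n (vsub a la)). pose proof (vdot_ge0 n (vsub b lb)).
  pose proof (vdot_ge0 n (vsub c lc)).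
  repeat split; apply sqrt_le_1_alt; lra.
Qed.

Lemma tnorm_le_components n (a b c la lb lc : vec n) :
  enorm (@tdot n) (tsub (a, b, c) (la, lb, lc))
  <= vnorm (vsub a la) + vnorm (vsub b lb) + vnorm (vsub c lc).
Proof.
  pose proof (vnorm_ge0 n (vsub a la)). pose proof (vnorm_ge0 n (vsub b lb)).
  pose proof (vnorm_ge0 n (vsub c lc)).
  unfold enorm, tdot, tsub. cbv beta iota. 
  rewrite <- (sqrt_pow2 (vnorm (vsub a la) + vnorm (vsub b lb) + vnorm (vsub c lc))) by lra.
  apply sqrt_le_1_alt. rewrite <- !vnorm_sq. nra.
Qed.

Lemma tnorm_sub_self n (w : triple n) : enorm (@tdot n) (tsub w w) = 0.
Proof.
  destruct w as [[a b] c]. pose proof (tnorm_le_components n a b c a b c) as H.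
  rewrite !vnorm_sub_self in H. apply Rle_antisym; [lra | apply sqrt_pos].
Qed.

Lemma tsub_zero n (w : triple n) : tsub w ((fun _ => 0), (fun _ => 0), (fun _ => 0)) = w.
Proof. destruct w as [[a b] c]. unfold tsub. f_equal; [f_equal|]; vext. Qed.

Lemma ecluster_components n (a b c : nat -> vec n) la lb lc :
  ecluster (@tdot n) (@tsub n) (fun t => (a t, b t, c t)) (la, lb, lc) ->
  ecluster (@vdot n) (@vsub n) a la /\ ecluster (@vdot n) (@vsub n) b lb /\
  ecluster (@vdot n) (@vsub n) c lc.
Proof.
  intros H.
  repeat split; intros eps He N; destruct (H eps He N) as [k [Hk Hd]]; exists k; split; auto;
    destruct (tnorm_ge_components n (a k) (b k) (c k) la lb lc) as [H1 [H2 H3]];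
    unfold enorm, vnorm in *; lra.
Qed.

Lemma ecv_components n (a b c : nat -> vec n) la lb lc :
  vcv a la -> vcv b lb -> vcv c lc ->
  ecv (@tdot n) (@tsub n) (fun t => (a t, b t, c t)) (la, lb, lc).
Proof.
  rewrite !vcv_vnorm. intros Ha Hb Hc.
  apply Un_cv_squeeze0 with
    (e := fun t => vnorm (vsub (a t) la) + vnorm (vsub (b t) lb) + vnorm (vsub (c t) lc)).
  - intro t. split; [apply sqrt_pos | apply tnorm_le_components].
  - rewrite <- (Rplus_0_r 0), <- (Rplus_0_r (0 + 0)). repeat apply CV_plus; auto.
Qed.

Lemma ecv_components_inv n (a b c : nat -> vec n) la lb lc :
  ecv (@tdot n) (@tsub n) (fun t => (a t, b t, c t)) (la, lb, lc) ->
  vcv a la /\ vcv b lb /\ vcv c lc.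
Proof.
  intros H. rewrite !vcv_vnorm.
  repeat split; eapply Un_cv_squeeze0; try exact H; intro t;
    destruct (tnorm_ge_components n (a t) (b t) (c t) la lb lc) as [H1 [H2 H3]];
    split; auto using vnorm_ge0.
Qed.

Lemma ecv_dim0 (s : nat -> triple 0) l : ecv (@tdot 0) (@tsub 0) s l.
Proof.
  intros eps He. exists 0%nat. intros t _.
  destruct (s t) as [[a b] c], l as [[la lb] lc].
  unfold Rdist, enorm, tdot, tsub, vdot. simpl fsum.
  rewrite !Rplus_0_r, sqrt_0, Rminus_0_r, Rabs_R0. lra.
Qed.

Lemma frechet_limiting_subgrad n (h : triple n -> option R) w v hw :
  h w = Some hw -> frechet_subgrad (@tdot n) (@tsub n) h w v ->
  limiting_subgrad (@tdot n) (@tsub n) h w v.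
Proof.
  intros Hw Hf. exists hw. split; auto.
  exists (fun _ => w), (fun _ => v), (fun _ => hw). unfold ecv. rewrite !tnorm_sub_self.
  repeat split; auto using Un_cv_const.
Qed.

Fixpoint psum (e : nat -> R) (m : nat) : R :=
  match m with O => 0 | S m => psum e m + e m end.

Lemma psum_ge0 (e : nat -> R) m : (forall j, 0 <= e j) -> 0 <= psum e m.
Proof. intros H. induction m; simpl; [lra|]. specialize (H m). lra. Qed.

Lemma psum_consecutive_le (d : nat -> R) K m : 0 <= K -> (forall j, 0 <= d j) ->
  psum (fun j => K * (d j + d (S j))) m <= 2 * K * psum d (S m).
Proof.
  intros HK Hd.
  assert (E : psum (fun j => K * (d j + d (S j))) m = K * (psum d m + psum d (S m) - d 0%nat)).
  { induction m; simpl in *; [ring|]. rewrite IHm. ring. }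
  rewrite E. simpl. pose proof (psum_ge0 d m Hd). pose proof (Hd m). pose proof (Hd 0%nat). nra.
Qed.

Lemma vnorm_telescope n (a : nat -> vec n) (e : nat -> R) :
  (forall i, vnorm (vsub (a (S i)) (a i)) <= e i) ->
  forall i k, vnorm (vsub (a (k + i)%nat) (a i)) <= psum e (k + i) - psum e i.
Proof.
  intros H i k. induction k; simpl.
  - rewrite vnorm_sub_self. lra.
  - pose proof (vnorm_triangle n (a (S (k + i))) (a (k + i)%nat) (a i)).
    specialize (H (k + i)%nat). lra.
Qed.

Lemma vnorm_sub_le_psum n (a : nat -> vec n) (e : nat -> R) l :
  (forall i, vnorm (vsub (a (S i)) (a i)) <= e i) ->
  forall m, vnorm (vsub (a m) l) <= vnorm (vsub (a 0%nat) l) + psum e m.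
Proof.
  intros H m. pose proof (vnorm_telescope n a e H 0 m) as T. rewrite Nat.add_0_r in T.
  pose proof (vnorm_triangle n (a m) (a 0%nat) l). simpl in T. lra.
Qed.

Lemma vcv_of_finite_length n (a : nat -> vec n) (e : nat -> R) l B :
  (forall i, vnorm (vsub (a (S i)) (a i)) <= e i) -> (forall m, psum e m <= B) ->
  ecluster (@vdot n) (@vsub n) a l -> vcv a l.
Proof.
  intros He HB Hcl.
  assert (Hinc : Un_growing (psum e)).
  { intro m. simpl. pose proof (vnorm_ge0 n (vsub (a (S m)) (a m))). specialize (He m). lra. }
  assert (Hub : has_ub (psum e)) by (exists B; intros r [i ->]; apply HB).
  destruct (growing_cv (psum e) Hinc Hub) as [S Hcv].
  assert (Htail : forall i, vnorm (vsub (a i) l) <= S - psum e i).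
  { intro i. apply Rle_plus_epsilon. intros eps Heps.
    destruct (Hcl eps Heps i) as [k [Hk Hdist]].
    pose proof (vnorm_telescope n a e He i (k - i)) as T. replace (k - i + i)%nat with k in T by lia.
    pose proof (vnorm_triangle n (a i) (a k) l). rewrite vnorm_subC in T.
    pose proof (growing_ineq _ _ Hinc Hcv k). unfold enorm, vnorm in *. lra. }
  apply vcv_vnorm, Un_cv_squeeze0 with (e := fun i => S - psum e i).
  - intro i. split; [apply vnorm_ge0 | apply Htail].
  - rewrite <- (Rminus_diag S). apply CV_minus; auto using Un_cv_const.
Qed.

(* Inside the ball of radius [delta] each step [d t] is paid for by a decrease of [phi];
   since the distance [r] is bounded by the path length, the sequence never leaves the ball. *)
Lemma finite_length_of_local_descent (d phi r : nat -> R) kappa C r0 delta dmax :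
  0 < kappa -> 0 <= C -> (forall t, 0 <= phi t) -> (forall t, d t <= dmax) ->
  (forall t, r t < delta -> kappa * d t <= phi t - phi (S t)) ->
  (forall m, r m <= r0 + C * psum d (S m)) ->
  r0 + C * (phi 0%nat / kappa + dmax) < delta ->
  forall m, kappa * psum d m <= phi 0%nat - phi m.
Proof.
  intros Hk HC Hphi Hd Hdesc Hr Hsmall m. induction m as [|m IH]; simpl; [lra|].
  assert (Hpsum : psum d m <= phi 0%nat / kappa).
  { apply Rmult_le_reg_l with kappa; auto. specialize (Hphi m).
    replace (kappa * (phi 0%nat / kappa)) with (phi 0%nat) by (field; lra). lra. }
  assert (Hin : r m < delta).
  { specialize (Hr m). simpl in Hr. specialize (Hd m).
    assert (C * (psum d m + d m) <= C * (phi 0%nat / kappa + dmax))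
      by (apply Rmult_le_compat_l; lra).
    lra. }
  specialize (Hdesc m Hin). lra.
Qed.

Lemma lt_eta_mono a b eta : b <= a -> lt_eta a eta -> lt_eta b eta.
Proof. destruct eta; simpl; auto. lra. Qed.

Lemma lt_eta_small (eta : option R) d0 : lt_eta 0 eta -> 0 < d0 ->
  exists rho, 0 < rho <= d0 /\ forall s, s < rho -> lt_eta s eta.
Proof.
  intros He Hd. destruct eta as [e|]; simpl in *.
  - exists (Rmin d0 e). split; [split; [apply Rmin_pos; lra | apply Rmin_l]|].
    intros s Hs. pose proof (Rmin_r d0 e). lra.
  - exists d0. auto with real.
Qed.

Lemma concave_tangent_le (phi dphi : R -> R) (eta : option R) a b :
  (forall a b t, 0 <= a -> lt_eta a eta -> 0 <= b -> lt_eta b eta -> 0 <= t <= 1 ->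
       t * phi a + (1 - t) * phi b <= phi (t * a + (1 - t) * b)) ->
  derivable_pt_lim phi a (dphi a) -> 0 <= b <= a -> 0 < a -> lt_eta a eta ->
  dphi a * (a - b) <= phi a - phi b.
Proof.
  intros Hcv Hd Hb Ha Hea.
  destruct (Req_dec b a) as [E|E]; [subst; lra|].
  assert (Hab : 0 < a - b) by lra.
  apply Rle_plus_epsilon. intros e He.
  destruct (Hd (e / (a - b))) as [del Hdel]; [apply Rdiv_lt_0_compat; lra|].
  pose proof (cond_pos del) as Hdp.
  set (t := Rmin 1 (del / (2 * (a - b)))).
  assert (Ht0 : 0 < t) by (apply Rmin_pos; [lra | apply Rdiv_lt_0_compat; lra]).
  assert (Ht : t * (a - b) <= del / 2).
  { assert (t <= del / (2 * (a - b))) by apply Rmin_r.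
    apply Rmult_le_compat_r with (r := a - b) in H; [|lra].
    replace (del / (2 * (a - b)) * (a - b)) with (del / 2) in H by (field; lra). lra. }
  set (h := - (t * (a - b))).
  specialize (Hdel h ltac:(unfold h; nra)
                ltac:(unfold h; rewrite Rabs_Ropp, Rabs_right by nra; lra)).
  specialize (Hcv b a t (proj1 Hb) (lt_eta_mono a b eta (proj2 Hb) Hea) (Rlt_le _ _ Ha) Hea
                (conj (Rlt_le _ _ Ht0) (Rmin_l _ _))).
  replace (t * b + (1 - t) * a) with (a + h) in Hcv by (unfold h; ring).
  set (D := (phi (a + h) - phi a) / h) in *.
  assert (HD : t * (D * (a - b)) <= t * (phi a - phi b)).
  { replace (t * (D * (a - b))) with (phi a - phi (a + h)) by (unfold D, h; field; nra). lra. }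
  apply Rmult_le_reg_l in HD; auto.
  apply Rabs_def2 in Hdel. destruct Hdel as [_ Hdel].
  assert (dphi a * (a - b) < (D + e / (a - b)) * (a - b)) by (apply Rmult_lt_compat_r; lra).
  replace ((D + e / (a - b)) * (a - b)) with (D * (a - b) + e) in H by (field; lra). lra.
Qed.

Section PR_iteration.
Variables (n : nat) (f : vec n -> R) (df : vec n -> vec n) (g : vec n -> option R).
Variables (sigma L gamma : R) (y z x : nat -> vec n).
Hypothesis Hgrad : is_gradient f df.
Hypothesis Hconv : strongly_convex f sigma.
Hypothesis Hsigma : 0 < sigma.
Hypothesis Hlip : lipschitz df L.
Hypothesis HL : 0 < L.
Hypothesis Hgamma : 0 < gamma.
Hypothesis Hit : PR_iteration f g gamma y z x.

(* [g] is finite at every iterate [z (S t)], where the default value is never used. *)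
Definition gval (v : vec n) : R := match g v with Some r => r | None => 0 end.

Definition merit (t : nat) : R :=
  f (y t) + gval (z t) - 3 / (2 * gamma) * vnorm (vsub (y t) (z t)) ^ 2
  + / gamma * vdot (vsub (x t) (y t)) (vsub (z t) (y t)).

Definition ystep (t : nat) : R := vnorm (vsub (y (S t)) (y t)).

Definition xstep_factor : R := 1 + gamma * L.

Lemma xstep_factor_pos : 0 < xstep_factor.
Proof. unfold xstep_factor. nra. Qed.

Lemma ystep_ge0 t : 0 <= ystep t.
Proof. apply vnorm_ge0. Qed.

Lemma x_eq t : x t = vadd (y (S t)) (vscal gamma (df (y (S t)))).
Proof.
  destruct (Hit t) as [Hy _].
  rewrite (prox_gradient_eq n f df gamma (y (S t)) (x t) Hgrad Hgamma Hy). vext. lra.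
Qed.

Lemma z_eq t : z (S t) = vadd (y (S t)) (vscal (/ 2) (vsub (x (S t)) (x t))).
Proof. destruct (Hit t) as [_ [_ Hx]]. rewrite Hx. vext. Qed.

Lemma g_iterate_finite t : exists r, g (z (S t)) = Some r.
Proof. destruct (Hit t) as [_ [[r [H _]] _]]. eauto. Qed.

Lemma Pgamma_iterate t : Pgamma f g gamma (y (S t), z (S t), x (S t)) = Some (merit (S t)).
Proof.
  destruct (g_iterate_finite t) as [r H]. unfold Pgamma, merit, gval. rewrite H. reflexivity.
Qed.

Lemma xstep_le t : vnorm (vsub (x (S t)) (x t)) <= xstep_factor * ystep (S t).
Proof.
  rewrite (x_eq (S t)), (x_eq t).
  replace (vsub (vadd (y (S (S t))) (vscal gamma (df (y (S (S t))))))
                (vadd (y (S t)) (vscal gamma (df (y (S t))))))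
    with (vadd (vsub (y (S (S t))) (y (S t))) (vscal gamma (vsub (df (y (S (S t)))) (df (y (S t))))))
    by vext.
  eapply Rle_trans; [apply vnorm_add|]. rewrite vnorm_scal, Rabs_right by lra.
  pose proof (Hlip (y (S (S t))) (y (S t))). unfold xstep_factor, ystep. nra.
Qed.

Lemma zstep_le t :
  vnorm (vsub (z (S (S t))) (z (S t)))
  <= ystep (S t) + xstep_factor / 2 * (ystep (S (S t)) + ystep (S t)).
Proof.
  rewrite (z_eq (S t)), (z_eq t).
  replace (vsub (vadd (y (S (S t))) (vscal (/ 2) (vsub (x (S (S t))) (x (S t)))))
                (vadd (y (S t)) (vscal (/ 2) (vsub (x (S t)) (x t)))))
    with (vadd (vsub (y (S (S t))) (y (S t)))
               (vscal (/ 2) (vadd (vsub (x (S (S t))) (x (S t))) (vscal (-1) (vsub (x (S t)) (x t))))))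
    by vext.
  eapply Rle_trans; [apply vnorm_add|]. rewrite vnorm_scal, Rabs_right by lra.
  pose proof (vnorm_add n (vsub (x (S (S t))) (x (S t))) (vscal (-1) (vsub (x (S t)) (x t)))) as H.
  rewrite vnorm_scal, (Rabs_left (-1)) in H by lra.
  pose proof (xstep_le (S t)). pose proof (xstep_le t). unfold ystep at 1. lra.
Qed.

Lemma merit_descent t :
  merit (S (S t)) <= merit (S t) - (sigma - gamma * L ^ 2) / 2 * ystep (S t) ^ 2.
Proof.
  destruct (Hit (S t)) as [_ [[gz1 [Hgz1 Hz]] Hx2]].
  destruct (g_iterate_finite t) as [gz Hgz].
  (* minimality of the z-step, compared with the previous iterate z (S t) *)
  specialize (Hz (z (S t)) gz Hgz). rewrite !Rmult_1_l in Hz.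
  set (c := vsub (vscal 2 (y (S (S t)))) (x (S t))) in Hz.
  pose proof (strongly_convex_gradient_ineq n f df sigma Hgrad Hconv Hsigma
                (y (S (S t))) (y (S t))) as Hsc.
  pose proof (Hlip (y (S (S t))) (y (S t))) as Hl.
  pose proof (vnorm_ge0 n (vsub (df (y (S (S t)))) (df (y (S t))))).
  assert (Hl2 : vnorm (vsub (df (y (S (S t)))) (df (y (S t)))) ^ 2 <= L ^ 2 * ystep (S t) ^ 2)
    by (unfold ystep in *; pose proof (vnorm_ge0 n (vsub (y (S (S t))) (y (S t)))); nra).
  assert (E : merit (S (S t)) - merit (S t)
       - ((gz1 + / (2 * gamma) * vnorm (vsub (z (S (S t))) c) ^ 2)
          - (gz + / (2 * gamma) * vnorm (vsub (z (S t)) c) ^ 2))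
       = f (y (S (S t))) - f (y (S t)) - vdot (df (y (S (S t)))) (vsub (y (S (S t))) (y (S t)))
         + gamma / 2 * vnorm (vsub (df (y (S (S t)))) (df (y (S t)))) ^ 2).
  { unfold merit, gval, c. rewrite Hgz1, Hgz, !vnorm_sq, Hx2, (z_eq t), (x_eq (S t)), (x_eq t).
    set (Y := y (S t)). set (Y1 := y (S (S t))). set (G := df Y). set (G1 := df Y1).
    set (Z1 := z (S (S t))).
    vexp.
    rewrite ?(vdot_comm n Y1 Y), ?(vdot_comm n G Y), ?(vdot_comm n G1 Y), ?(vdot_comm n Z1 Y),
      ?(vdot_comm n G Y1), ?(vdot_comm n G1 Y1), ?(vdot_comm n Z1 Y1), ?(vdot_comm n G1 G),
      ?(vdot_comm n Z1 G), ?(vdot_comm n Z1 G1).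
    field. lra. }
  replace (vsub (y (S t)) (y (S (S t)))) with (vscal (-1) (vsub (y (S (S t))) (y (S t)))) in Hsc
    by vext.
  rewrite vdot_scall, vdot_scalr, vdot_scalr, <- vnorm_sq in Hsc. fold (ystep (S t)) in Hsc.
  assert (gamma / 2 * vnorm (vsub (df (y (S (S t)))) (df (y (S t)))) ^ 2
          <= gamma / 2 * (L ^ 2 * ystep (S t) ^ 2)) by (apply Rmult_le_compat_l; lra).
  lra.
Qed.

Definition subgrad_vec (t : nat) : triple n :=
  ((fun _ => 0), vscal (/ gamma) (vsub (x t) (x (S t))),
   vscal (/ (2 * gamma)) (vsub (x (S t)) (x t))).

Definition subgrad_factor : R := 2 / gamma * xstep_factor.

Lemma subgrad_factor_pos : 0 < subgrad_factor.
Proof.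
  pose proof xstep_factor_pos. unfold subgrad_factor.
  apply Rmult_lt_0_compat; [apply Rdiv_lt_0_compat|]; lra.
Qed.

Lemma subgrad_vec_norm_le t : enorm (@tdot n) (subgrad_vec t) <= subgrad_factor * ystep (S t).
Proof.
  unfold subgrad_factor.
  pose proof (xstep_le t) as H. pose proof xstep_factor_pos. pose proof (ystep_ge0 (S t)).
  assert (Hgi : 0 < / gamma) by (apply Rinv_0_lt_compat; lra).
  pose proof (vnorm_ge0 n (vsub (x (S t)) (x t))). set (a := vnorm (vsub (x (S t)) (x t))) in *.
  unfold enorm, tdot, subgrad_vec. cbv beta iota. rewrite vdot0l.
  apply sqrt_le_of_sq. { unfold Rdiv. apply Rmult_le_pos; [apply Rmult_le_pos|]; lra. }
  replace (vsub (x t) (x (S t))) with (vscal (-1) (vsub (x (S t)) (x t))) by vext.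
  rewrite !vdot_scall, !vdot_scalr, <- vnorm_sq. fold a.
  replace (0 + / gamma * (-1 * (/ gamma * (-1 * a ^ 2))) + / (2 * gamma) * (/ (2 * gamma) * a ^ 2))
    with (5 / 4 * (a / gamma) ^ 2) by (field; lra).
  replace ((2 / gamma * xstep_factor * ystep (S t)) ^ 2)
    with (4 * (xstep_factor * ystep (S t) / gamma) ^ 2) by (field; lra).
  assert (a / gamma <= xstep_factor * ystep (S t) / gamma)
    by (unfold Rdiv; apply Rmult_le_compat_r; lra).
  assert (0 <= a / gamma) by (unfold Rdiv; apply Rmult_le_pos; lra).
  nra.
Qed.

Lemma merit_expansion t uy uz ux guz :
  g uz = Some guz ->
  f uy + guz - 3 / (2 * gamma) * vnorm (vsub uy uz) ^ 2 + / gamma * vdot (vsub ux uy) (vsub uz uy)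
  - merit (S t) - tdot (subgrad_vec t) (tsub (uy, uz, ux) (y (S t), z (S t), x (S t)))
  = (f uy - f (y (S t)) - vdot (df (y (S t))) (vsub uy (y (S t))))
    + ((guz + / (2 * gamma) * vnorm (vsub uz (vsub (vscal 2 (y (S t))) (x t))) ^ 2)
       - (gval (z (S t)) + / (2 * gamma) * vnorm (vsub (z (S t)) (vsub (vscal 2 (y (S t))) (x t))) ^ 2))
    + / gamma * (-3/2 * vdot (vsub (vsub uy (y (S t))) (vsub uz (z (S t))))
                             (vsub (vsub uy (y (S t))) (vsub uz (z (S t))))
                 + vdot (vsub (vsub ux (x (S t))) (vsub uy (y (S t))))
                        (vsub (vsub uz (z (S t))) (vsub uy (y (S t))))
                 - / 2 * vdot (vsub uz (z (S t))) (vsub uz (z (S t)))).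
Proof.
  intros _. destruct (Hit t) as [Hy [_ HX]].
  rewrite (prox_gradient_eq n f df gamma (y (S t)) (x t) Hgrad Hgamma Hy).
  unfold merit, tdot, tsub, subgrad_vec. cbv beta iota. rewrite !vnorm_sq, vdot0l, HX.
  set (Y := y (S t)). set (Z := z (S t)). set (X0 := x t). set (G := gval Z).
  vexp.
  rewrite ?(vdot_comm n Z Y), ?(vdot_comm n X0 Y), ?(vdot_comm n uy Y), ?(vdot_comm n uz Y),
    ?(vdot_comm n ux Y), ?(vdot_comm n X0 Z), ?(vdot_comm n uy Z), ?(vdot_comm n uz Z),
    ?(vdot_comm n ux Z), ?(vdot_comm n uy X0), ?(vdot_comm n uz X0), ?(vdot_comm n ux X0),
    ?(vdot_comm n uz uy), ?(vdot_comm n ux uy), ?(vdot_comm n ux uz).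
  field. lra.
Qed.

Lemma frechet_subgrad_iterate t :
  frechet_subgrad (@tdot n) (@tsub n) (Pgamma f g gamma) (y (S t), z (S t), x (S t)) (subgrad_vec t).
Proof.
  exists (merit (S t)); split; [apply Pgamma_iterate|].
  intros eps He. exists (eps * gamma / 6). split; [apply Rdiv_lt_0_compat; nra|].
  intros [[uy uz] ux] Hu. unfold Pgamma.
  destruct (g uz) as [guz|] eqn:Eg; [|trivial].
  pose proof (merit_expansion t uy uz ux guz Eg) as E.
  destruct (Hit t) as [_ [[gZ [HgZ Hz]] _]].
  specialize (Hz uz guz Eg). unfold gval in E. rewrite HgZ in E.
  pose proof (strongly_convex_gradient_ineq n f df sigma Hgrad Hconv Hsigma (y (S t)) uy) as Hf.
  pose proof (vdot_ge0 n (vsub uy (y (S t)))).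
  pose proof (quadratic_form_lower_bound n (vsub uy (y (S t))) (vsub uz (z (S t))) (vsub ux (x (S t))))
    as HQ.
  unfold enorm, tdot, tsub in Hu |- *. cbv beta iota in Hu |- *. unfold tdot, tsub in E.
  set (T := vdot (vsub uy (y (S t))) (vsub uy (y (S t))) + vdot (vsub uz (z (S t))) (vsub uz (z (S t)))
            + vdot (vsub ux (x (S t))) (vsub ux (x (S t)))) in *.
  assert (HT : 0 <= T)
    by (unfold T; pose proof (vdot_ge0 n (vsub uz (z (S t))));
        pose proof (vdot_ge0 n (vsub ux (x (S t)))); lra).
  assert (Hgi : 0 < / gamma) by (apply Rinv_0_lt_compat; lra).
  (* the quadratic error term is O(T) = o(sqrt T) *)
  assert (Hsq : 6 / gamma * T <= eps * sqrt T).
  { pose proof (sqrt_sqrt T HT). pose proof (sqrt_pos T).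
    assert (6 / gamma * sqrt T <= eps).
    { apply Rmult_le_reg_r with (gamma / 6); [lra|].
      replace (6 / gamma * sqrt T * (gamma / 6)) with (sqrt T) by (field; lra). lra. }
    rewrite <- H0 at 1. nra. }
  assert (0 <= sigma / 2 * vdot (vsub uy (y (S t))) (vsub uy (y (S t)))) by (apply Rmult_le_pos; lra).
  unfold Rdiv in *. nra.
Qed.

Definition increment_factor : R := 1 + xstep_factor.

Lemma increments_le t : (1 <= t)%nat ->
  vnorm (vsub (y (S t)) (y t)) <= increment_factor * (ystep t + ystep (S t)) /\
  vnorm (vsub (z (S t)) (z t)) <= increment_factor * (ystep t + ystep (S t)) /\
  vnorm (vsub (x (S t)) (x t)) <= increment_factor * (ystep t + ystep (S t)).
Proof.
  intros Ht. pose proof xstep_factor_pos. pose proof (ystep_ge0 t). pose proof (ystep_ge0 (S t)).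
  unfold increment_factor. repeat split.
  - fold (ystep t). nra.
  - destruct t as [|t]; [lia|]. pose proof (zstep_le t). nra.
  - pose proof (xstep_le t). nra.
Qed.

Lemma increment_factor_pos : 0 < increment_factor.
Proof. pose proof xstep_factor_pos. unfold increment_factor. lra. Qed.

Variables ys zs xs : vec n.

Definition cluster_dist (t : nat) : R :=
  vnorm (vsub (y t) ys) + vnorm (vsub (z t) zs) + vnorm (vsub (x t) xs).

Lemma dist_le_path_length N : (1 <= N)%nat -> forall m,
  enorm (@tdot n) (tsub (y (m + N)%nat, z (m + N)%nat, x (m + N)%nat) (ys, zs, xs))
  <= cluster_dist N + 6 * increment_factor * psum (fun j => ystep (j + N)) (S m).
Proof.
  intros HN m. set (d := fun j => ystep (j + N)).
  set (e := fun j => increment_factor * (d j + d (S j))).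
  pose proof (psum_consecutive_le d increment_factor m (Rlt_le _ _ increment_factor_pos)
                (fun j => ystep_ge0 (j + N))) as Hsum. fold e in Hsum.
  assert (Hc : forall c : nat -> vec n, forall l,
            (forall j, vnorm (vsub (c (S j + N)%nat) (c (j + N)%nat)) <= e j) ->
            vnorm (vsub (c (m + N)%nat) l)
            <= vnorm (vsub (c N) l) + 2 * increment_factor * psum d (S m)).
  { intros c l Hinc. pose proof (vnorm_sub_le_psum n (fun j => c (j + N)%nat) e l Hinc m).
    simpl in *. lra. }
  pose proof (fun j => increments_le (j + N) ltac:(lia)) as I.
  pose proof (Hc y ys (fun j => proj1 (I j))).
  pose proof (Hc z zs (fun j => proj1 (proj2 (I j)))).
  pose proof (Hc x xs (fun j => proj2 (proj2 (I j)))).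
  pose proof (tnorm_le_components n (y (m + N)%nat) (z (m + N)%nat) (x (m + N)%nat) ys zs xs).
  unfold cluster_dist. lra.
Qed.

Lemma ecv_of_finite_length N B : (1 <= N)%nat ->
  ecluster (@tdot n) (@tsub n) (fun t => (y t, z t, x t)) (ys, zs, xs) ->
  (forall m, psum (fun j => ystep (j + N)) m <= B) ->
  ecv (@tdot n) (@tsub n) (fun t => (y t, z t, x t)) (ys, zs, xs).
Proof.
  intros HN Hcl HB. set (d := fun j => ystep (j + N)).
  set (e := fun j => increment_factor * (d j + d (S j))).
  assert (Hsum : forall m, psum e m <= 2 * increment_factor * B).
  { intro m. pose proof increment_factor_pos.
    pose proof (psum_consecutive_le d increment_factor m (Rlt_le _ _ increment_factor_pos)
                  (fun j => ystep_ge0 (j + N))).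
    fold e in H0. assert (psum d (S m) <= B) by apply HB. nra. }
  destruct (ecluster_components n y z x ys zs xs Hcl) as [Cy [Cz Cx]].
  pose proof (fun j => increments_le (j + N) ltac:(lia)) as I.
  apply ecv_components; eapply vcv_shift, vcv_of_finite_length; eauto using ecluster_shift.
  - exact (fun j => proj1 (I j)).
  - exact (fun j => proj1 (proj2 (I j))).
  - exact (fun j => proj2 (proj2 (I j))).
Qed.

Hypothesis Hcl : ecluster (@tdot n) (@tsub n) (fun t => (y t, z t, x t)) (ys, zs, xs).
Hypothesis Hlsc : elsc (@tdot n) (@tsub n) (Pgamma f g gamma).
Hypothesis Hstep : gamma * L ^ 2 < sigma.

Definition descent_const : R := (sigma - gamma * L ^ 2) / 2.

Lemma descent_const_pos : 0 < descent_const.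
Proof. unfold descent_const. lra. Qed.

Lemma merit_nonincreasing p q : (1 <= p <= q)%nat -> merit q <= merit p.
Proof.
  intros [Hp Hpq]. induction Hpq as [|q Hpq IH]; [lra|]. destruct q as [|q]; [lia|].
  pose proof (merit_descent q). pose proof descent_const_pos.
  assert (0 <= descent_const * ystep (S q) ^ 2) by (apply Rmult_le_pos; nra).
  unfold descent_const in *. lra.
Qed.

Lemma cluster_value_le_merit m : (1 <= m)%nat ->
  exists Ps, Pgamma f g gamma (ys, zs, xs) = Some Ps /\ Ps <= merit m.
Proof.
  intros Hm. destruct (ecluster_subseq _ _ _ _ Hcl) as [s [Hs Hcv]].
  apply (Hlsc (merit m) (fun j => (y (s (j + m)%nat), z (s (j + m)%nat), x (s (j + m)%nat)))).
  - intro j. exists (merit (s (j + m)%nat)). specialize (Hs (j + m)%nat). split.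
    + replace (s (j + m)%nat) with (S (pred (s (j + m)%nat))) by lia. apply Pgamma_iterate.
    + apply merit_nonincreasing. lia.
  - exact (CV_shift' _ m _ Hcv).
Qed.

Lemma merit_ge_cluster_value Ps : Pgamma f g gamma (ys, zs, xs) = Some Ps ->
  forall m, (1 <= m)%nat -> Ps <= merit m.
Proof.
  intros HP m Hm. destruct (cluster_value_le_merit m Hm) as [r [Hr Hle]].
  rewrite HP in Hr. injection Hr as ->. exact Hle.
Qed.

(* Minimality of the z-step against the competitor [zs] bounds the merit values from
   above by a continuous function of the iterates. *)
Definition merit_majorant (w : triple n) : R :=
  let '(u, v, w) := w in
  f u - 3 / (2 * gamma) * vdot (vsub u v) (vsub u v) + / gamma * vdot (vsub w u) (vsub v u)
  + / (2 * gamma) * (vdot (vsub zs (vsub (vscal 2 v) w)) (vsub zs (vsub (vscal 2 v) w))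
                     - vdot (vsub w v) (vsub w v)).

Lemma merit_le_majorant t gzs : g zs = Some gzs ->
  merit (S t) <= gzs + merit_majorant (y (S t), z (S t), x (S t)).
Proof.
  intros Hgzs. destruct (Hit t) as [_ [[gz [Hgz Hz]] HX]].
  specialize (Hz zs gzs Hgzs).
  replace (vsub (vscal 2 (y (S t))) (x t)) with (vsub (vscal 2 (z (S t))) (x (S t))) in Hz
    by (rewrite HX; vext).
  replace (vsub (z (S t)) (vsub (vscal 2 (z (S t))) (x (S t)))) with (vsub (x (S t)) (z (S t))) in Hz
    by vext.
  unfold merit, gval, merit_majorant. rewrite Hgz, !vnorm_sq in *. lra.
Qed.

Lemma Pgamma_cluster gzs : g zs = Some gzs ->
  Pgamma f g gamma (ys, zs, xs) = Some (gzs + merit_majorant (ys, zs, xs)).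
Proof.
  intros Hgzs. unfold Pgamma, merit_majorant. rewrite Hgzs, vnorm_sq. f_equal.
  replace (vsub zs (vsub (vscal 2 zs) xs)) with (vsub xs zs) by vext. ring.
Qed.

Lemma merit_majorant_cv (a b c : nat -> vec n) la lb lc :
  vcv a la -> vcv b lb -> vcv c lc ->
  Un_cv (fun j => merit_majorant (a j, b j, c j)) (merit_majorant (la, lb, lc)).
Proof.
  intros Ha Hb Hc. unfold merit_majorant.
  repeat first [ apply CV_minus | apply CV_plus | apply CV_mult | apply Un_cv_const
               | apply (gradient_cv n f df _ _ Hgrad) | apply vdot_cv | apply vcv_sub
               | apply vcv_scal | apply vcv_const | assumption ].
Qed.

Lemma merit_cv Ps : Pgamma f g gamma (ys, zs, xs) = Some Ps -> Un_cv merit Ps.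
Proof.
  intros HP eps He.
  assert (Hgzs : exists gzs, g zs = Some gzs)
    by (unfold Pgamma in HP; destruct (g zs); [eauto | discriminate]).
  destruct Hgzs as [gzs Hgzs].
  assert (HPs : Ps = gzs + merit_majorant (ys, zs, xs))
    by (rewrite (Pgamma_cluster gzs Hgzs) in HP; congruence).
  destruct (ecluster_subseq _ _ _ _ Hcl) as [s [Hs Hcv]].
  destruct (ecv_components_inv n _ _ _ _ _ _ Hcv) as [Hy [Hz Hx]].
  destruct (merit_majorant_cv _ _ _ _ _ _ Hy Hz Hx (eps / 2) ltac:(lra)) as [N HN].
  specialize (HN N (le_n N)). unfold Rdist in HN. apply Rabs_def2 in HN.
  specialize (Hs N).
  pose proof (merit_le_majorant (pred (s N)) gzs Hgzs) as Hle.
  replace (S (pred (s N))) with (s N) in Hle by lia.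
  exists (s N). intros t Ht. unfold Rdist.
  pose proof (merit_ge_cluster_value Ps HP t ltac:(lia)).
  pose proof (merit_nonincreasing (s N) t ltac:(lia)).
  rewrite Rabs_right; lra.
Qed.

Lemma ystep_cv0 Ps : Pgamma f g gamma (ys, zs, xs) = Some Ps -> Un_cv ystep 0.
Proof.
  intros HP eps He. pose proof descent_const_pos.
  destruct (merit_cv Ps HP (descent_const * eps ^ 2) (Rmult_lt_0_compat _ _ H (pow_lt _ 2 He)))
    as [N HN].
  exists (S N). intros t Ht. destruct t as [|t]; [lia|].
  pose proof (merit_descent t). specialize (HN (S t) ltac:(lia)).
  pose proof (merit_ge_cluster_value Ps HP (S (S t)) ltac:(lia)). pose proof (ystep_ge0 (S t)).
  unfold Rdist in *. apply Rabs_def2 in HN.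
  rewrite Rminus_0_r, Rabs_right by lra.
  assert (descent_const * ystep (S t) ^ 2 < descent_const * eps ^ 2)
    by (unfold descent_const in *; lra).
  apply Rmult_lt_reg_l in H3; [|lra]. nra.
Qed.

Lemma zero_limiting_subgrad Ps : Pgamma f g gamma (ys, zs, xs) = Some Ps ->
  limiting_subgrad (@tdot n) (@tsub n) (Pgamma f g gamma) (ys, zs, xs)
    ((fun _ => 0), (fun _ => 0), (fun _ => 0)).
Proof.
  intros HP. destruct (ecluster_subseq _ _ _ _ Hcl) as [s [Hs Hcv]].
  assert (Es : forall j, s j = S (pred (s j))) by (intro j; specialize (Hs j); lia).
  exists Ps. split; auto.
  exists (fun j => (y (s j), z (s j), x (s j))), (fun j => subgrad_vec (pred (s j))),
    (fun j => merit (s j)).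
  split; [|split; [exact Hcv | split]].
  - intro j. rewrite (Es j). split; [apply Pgamma_iterate | apply frechet_subgrad_iterate].
  - apply Un_cv_subseq; [apply (merit_cv Ps HP) | intro j; specialize (Hs j); lia].
  - apply Un_cv_squeeze0 with (e := fun j => subgrad_factor * ystep (s j)).
    + intro j. split; [apply sqrt_pos|]. rewrite tsub_zero.
      replace (ystep (s j)) with (ystep (S (pred (s j)))) by (rewrite <- Es; reflexivity).
      apply subgrad_vec_norm_le.
    + rewrite <- (Rmult_0_r subgrad_factor). apply CV_mult; [apply Un_cv_const|].
      apply Un_cv_subseq; [apply (ystep_cv0 Ps HP) | intro j; specialize (Hs j); lia].
Qed.

Section KL_neighbourhood.
Variables (Ps : R) (eta : option R) (delta : R) (phi dphi : R -> R).
Hypothesis HPs : Pgamma f g gamma (ys, zs, xs) = Some Ps.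
Hypothesis Heta : lt_eta 0 eta.
Hypothesis Hdelta : delta > 0.
Hypothesis Hphi0 : phi 0 = 0.
Hypothesis Hphi_ge0 : forall s, 0 <= s -> lt_eta s eta -> 0 <= phi s.
Hypothesis Hphi_cont : forall s, 0 <= s -> lt_eta s eta ->
  forall eps, eps > 0 -> exists d, d > 0 /\
    forall t, 0 <= t -> lt_eta t eta -> Rabs (t - s) < d -> Rabs (phi t - phi s) < eps.
Hypothesis Hphi_concave : forall a b t, 0 <= a -> lt_eta a eta -> 0 <= b -> lt_eta b eta ->
  0 <= t <= 1 -> t * phi a + (1 - t) * phi b <= phi (t * a + (1 - t) * b).
Hypothesis Hphi_deriv : forall s, 0 < s -> lt_eta s eta ->
  derivable_pt_lim phi s (dphi s) /\ continuity_pt dphi s /\ 0 < dphi s.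
Hypothesis HKL : forall w hw, enorm (@tdot n) (tsub w (ys, zs, xs)) < delta ->
  Pgamma f g gamma w = Some hw -> Ps < hw -> lt_eta (hw - Ps) eta ->
  forall v, limiting_subgrad (@tdot n) (@tsub n) (Pgamma f g gamma) w v ->
  dphi (hw - Ps) * enorm (@tdot n) v >= 1.

Definition kl_const : R := descent_const / subgrad_factor.

Lemma kl_const_pos : 0 < kl_const.
Proof. apply Rdiv_lt_0_compat; [apply descent_const_pos | apply subgrad_factor_pos]. Qed.

Lemma KL_descent_step t :
  enorm (@tdot n) (tsub (y (S t), z (S t), x (S t)) (ys, zs, xs)) < delta ->
  lt_eta (merit (S t) - Ps) eta ->
  kl_const * ystep (S t) <= phi (merit (S t) - Ps) - phi (merit (S (S t)) - Ps).
Proof.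
  intros Hball Heta_t.
  pose proof (merit_descent t) as Hdesc. fold descent_const in Hdesc.
  pose proof descent_const_pos. pose proof kl_const_pos. pose proof (ystep_ge0 (S t)).
  pose proof (merit_ge_cluster_value Ps HPs (S t) ltac:(lia)).
  pose proof (merit_ge_cluster_value Ps HPs (S (S t)) ltac:(lia)).
  assert (Hsq : 0 <= descent_const * ystep (S t) ^ 2) by (apply Rmult_le_pos; nra).
  destruct (Req_dec (merit (S t)) Ps) as [E|E].
  - assert (Hd0 : ystep (S t) = 0).
    { assert (ystep (S t) ^ 2 = 0) by (apply Rmult_eq_reg_l with descent_const; lra). nra. }
    replace (merit (S (S t))) with Ps by lra. rewrite E, Hd0. lra.
  - set (a := merit (S t) - Ps). set (b := merit (S (S t)) - Ps).
    destruct (Hphi_deriv a ltac:(unfold a; lra) Heta_t) as [Hd [_ Hdpos]].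
    pose proof (concave_tangent_le phi dphi eta a b Hphi_concave Hd
                  ltac:(unfold a, b; lra) ltac:(unfold a; lra) Heta_t) as Htan.
    pose proof (HKL _ _ Hball (Pgamma_iterate t) ltac:(lra) Heta_t (subgrad_vec t)
                  (frechet_limiting_subgrad n _ _ _ _ (Pgamma_iterate t)
                     (frechet_subgrad_iterate t))) as HK.
    fold a in HK. pose proof (subgrad_vec_norm_le t) as Hv. pose proof subgrad_factor_pos.
    assert (Hk1 : dphi a * (subgrad_factor * ystep (S t)) >= 1).
    { assert (dphi a * enorm (@tdot n) (subgrad_vec t) <= dphi a * (subgrad_factor * ystep (S t)))
        by (apply Rmult_le_compat_l; lra).
      lra. }
    assert (Hk2 : dphi a * (a - b) >= dphi a * (descent_const * ystep (S t) ^ 2))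
      by (apply Rmult_ge_compat_l; [lra | unfold a, b; lra]).
    replace (dphi a * (descent_const * ystep (S t) ^ 2))
      with (kl_const * ystep (S t) * (dphi a * (subgrad_factor * ystep (S t)))) in Hk2
      by (unfold kl_const; field; lra).
    assert (0 <= kl_const * ystep (S t)) by (apply Rmult_le_pos; lra).
    nra.
Qed.

Lemma KL_start_index : exists N, (1 <= N)%nat /\
  (forall t, (N <= t)%nat -> 0 <= merit t - Ps /\ lt_eta (merit t - Ps) eta) /\
  (forall t, (N <= t)%nat -> ystep t <= delta / (18 * increment_factor)) /\
  6 * increment_factor * (phi (merit N - Ps) / kl_const) < delta / 3 /\
  cluster_dist N < delta / 3.
Proof.
  pose proof kl_const_pos as Hk. pose proof increment_factor_pos as HK.
  set (kappa := kl_const) in *. set (K := increment_factor) in *.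
  destruct (Hphi_cont 0 (Rle_refl 0) Heta (kappa * delta / (18 * K))) as [d0 [Hd0 Hcont]].
  { apply Rdiv_lt_0_compat; [apply Rmult_lt_0_compat|]; lra. }
  destruct (lt_eta_small eta d0 Heta Hd0) as [rho [[Hrho Hrhod] Hrhoe]].
  destruct (merit_cv Ps HPs rho Hrho) as [N1 HN1].
  destruct (ystep_cv0 Ps HPs (delta / (18 * K))) as [N2 HN2].
  { apply Rdiv_lt_0_compat; lra. }
  destruct (Hcl (delta / 9) ltac:(lra) (S (max N1 N2))) as [N [HN HNdist]].
  assert (Hwin : forall t, (N <= t)%nat -> 0 <= merit t - Ps < rho).
  { intros t Ht. pose proof (merit_ge_cluster_value Ps HPs t ltac:(lia)).
    specialize (HN1 t ltac:(lia)). unfold Rdist in HN1. apply Rabs_def2 in HN1. lra. }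
  exists N. split; [lia|]. split; [|split; [|split]].
  - intros t Ht. destruct (Hwin t Ht). auto.
  - intros t Ht. specialize (HN2 t ltac:(lia)). unfold Rdist in HN2.
    rewrite Rminus_0_r, Rabs_right in HN2 by (apply Rle_ge, ystep_ge0). lra.
  - destruct (Hwin N (le_n N)) as [Hw1 Hw2].
    specialize (Hcont (merit N - Ps) Hw1 (Hrhoe _ Hw2) ltac:(rewrite Rminus_0_r, Rabs_right; lra)).
    rewrite Hphi0, Rminus_0_r in Hcont. apply Rabs_def2 in Hcont.
    apply Rmult_lt_reg_r with (kappa / (6 * K)); [apply Rdiv_lt_0_compat; lra|].
    replace (6 * K * (phi (merit N - Ps) / kappa) * (kappa / (6 * K))) with (phi (merit N - Ps))
      by (field; lra).
    replace (delta / 3 * (kappa / (6 * K))) with (kappa * delta / (18 * K)) by (field; lra). lra.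
  - destruct (tnorm_ge_components n (y N) (z N) (x N) ys zs xs) as [C1 [C2 C3]].
    unfold cluster_dist. lra.
Qed.

Lemma iterates_cv_KL : ecv (@tdot n) (@tsub n) (fun t => (y t, z t, x t)) (ys, zs, xs).
Proof.
  pose proof kl_const_pos as Hk. pose proof increment_factor_pos as HK.
  destruct KL_start_index as [N [HN [Hwin [Hsmall [Hphi_small Hdist0]]]]].
  set (kappa := kl_const) in *. set (K := increment_factor) in *.
  set (phiN := fun j => phi (merit (j + N) - Ps)).
  assert (HphiN : forall j, 0 <= phiN j).
  { intro j. destruct (Hwin (j + N)%nat ltac:(lia)). apply Hphi_ge0; auto. }
  assert (Hlen : forall m, kappa * psum (fun j => ystep (j + N)) m <= phiN 0%nat - phiN m).
  { apply finite_length_of_local_descent with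
      (r := fun j => enorm (@tdot n) (tsub (y (j + N)%nat, z (j + N)%nat, x (j + N)%nat) (ys, zs, xs)))
      (C := 6 * K) (r0 := cluster_dist N) (delta := delta) (dmax := delta / (18 * K)); auto; try lra.
    - intro t. apply Hsmall. lia.
    - intros t Hr. unfold phiN, kappa. change (S t + N)%nat with (S (t + N)).
      replace (t + N)%nat with (S (pred (t + N))) in * by lia.
      apply KL_descent_step; auto. apply Hwin. lia.
    - apply dist_le_path_length. lia.
    - rewrite Rmult_plus_distr_l.
      replace (6 * K * (delta / (18 * K))) with (delta / 3) by (field; lra).
      unfold phiN. simpl. lra. }
  apply ecv_of_finite_length with N (phiN 0%nat / kappa); [lia | exact Hcl |].
  intro m. specialize (Hlen m). specialize (HphiN m).
  apply Rmult_le_reg_l with kappa; auto.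
  replace (kappa * (phiN 0%nat / kappa)) with (phiN 0%nat) by (field; lra). lra.
Qed.

End KL_neighbourhood.

Lemma PR_iterates_cv :
  (forall wb, (exists v, limiting_subgrad (@tdot n) (@tsub n) (Pgamma f g gamma) wb v) ->
     KL_at (@tdot n) (@tsub n) (Pgamma f g gamma) wb) ->
  ecv (@tdot n) (@tsub n) (fun t => (y t, z t, x t)) (ys, zs, xs).
Proof.
  intros HKL.
  destruct (cluster_value_le_merit 1 (le_n 1)) as [Ps [HPs _]].
  destruct (HKL _ (ex_intro _ _ (zero_limiting_subgrad Ps HPs)))
    as [hb [Hhb [eta [delta [phi [dphi
         [Heta [Hdelta [Hphi0 [Hphi_ge0 [Hcont [Hconc [Hder HKLi]]]]]]]]]]]]].
  rewrite HPs in Hhb. injection Hhb as <-.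
  exact (iterates_cv_KL Ps eta delta phi dphi HPs Heta Hdelta Hphi0 Hphi_ge0 Hcont Hconc Hder HKLi).
Qed.

End PR_iteration.

Theorem theorem3 (n : nat) (f : vec n -> R) (df : vec n -> vec n)
  (g : vec n -> option R) (sigma L gamma : R)
  (y z x : nat -> vec n) (ys zs xs : vec n) :
  0 < sigma -> 0 < L ->
  is_gradient f df -> strongly_convex f sigma -> lipschitz df L ->
  eproper g -> elsc (@vdot n) (@vsub n) g ->
  (forall w, exists u, argmin_g g gamma (/ 2) w u) ->
  3 * sigma > 2 * L ->
  0 < gamma -> gamma < (3 * sigma - 2 * L) / L ^ 2 ->
  PR_iteration f g gamma y z x ->
  ecluster (@tdot n) (@tsub n) (fun t => (y t, z t, x t)) (ys, zs, xs) ->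
  KL_function (@tdot n) (@tsub n) (Pgamma f g gamma) ->
  exists l : triple n, ecv (@tdot n) (@tsub n) (fun t => (y t, z t, x t)) l.
Proof.
  (* The hypotheses on [g] only make the iteration well defined (the iterates are given), and
     3 sigma > 2 L is implied by the bounds on gamma. *)
  intros Hsigma HL Hgrad Hconv Hlip _ _ _ _ Hgamma Hgamma_lt Hit Hcl [_ [Hlsc HKL]].
  exists (ys, zs, xs). destruct n as [|m]; [apply ecv_dim0|].
  (* sigma <= L, hence gamma L^2 < 3 sigma - 2 L <= sigma *)
  assert (Hstep : gamma * L ^ 2 < sigma).
  { pose proof (strong_convexity_le_lipschitz (S m) f df sigma L Hgrad Hconv Hsigma Hlip
                  ltac:(lia)).
    apply Rmult_lt_compat_r with (r := L ^ 2) in Hgamma_lt; [|apply pow_lt; lra].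
    replace ((3 * sigma - 2 * L) / L ^ 2 * L ^ 2) with (3 * sigma - 2 * L) in Hgamma_lt
      by (field; lra).
    lra. }
  exact (PR_iterates_cv (S m) f df g sigma L gamma y z x Hgrad Hconv Hsigma Hlip HL Hgamma Hit
           ys zs xs Hcl Hlsc Hstep HKL).
Qed.
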